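(* Let $(V,\Omega)$ be a finite-dimensional real symplectic vector space and let $\theta^0$ be the one-form on $V$ given by $\theta^0_z(v_z)=\frac{1}{2}\Omega(z,v)$ for $z,v\in V$. Then the group ${\rm Aut}(V,\theta^0)$ of all diffeomorphisms $g:V\to V$ with $g^*\theta^0=\theta^0$ equals the linear symplectic group ${\rm Sp}(V,\Omega)$.
   Context: $V$ is a finite-dimensional real vector space and $\Omega$ is a nonsingular alternating bilinear form on $V$. For $z,v\in V$, $v_z\in T_zV$ denotes the tangent vector at $z$ corresponding to $v$ under the canonical identification $T_zV\cong V$ (i.e. $v_z\psi=\frac{d}{dt}\psi(z+tv)|_{t=0}$). For a smooth map $g:V\to V$ and a one-form $\theta$, $(g^*\theta)_z(v_z)=\theta_{g(z)}((g'_z v)_{g(z)})$, where $g'_z$ is the derivative of $g$ at $z$. ${\rm Sp}(V,\Omega)$ is the group of linear automorphisms $g$ of $V$ with $\Omega(gx,gy)=\Omega(x,y)$ for all $x,y\in V$. *)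

From HB Require Import structures.
From mathcomp Require Import all_boot all_order all_algebra.
From mathcomp Require Import all_classical all_reals all_analysis.
Set Implicit Arguments. Unset Strict Implicit. Unset Printing Implicit Defensive.
Import Order.TTheory GRing.Theory Num.Theory.
Import numFieldNormedType.Exports.
Local Open Scope ring_scope.

Section Defs.
Variables (R : realType) (n : nat).
Local Notation V := 'rV[R]_n.

Fixpoint iter_dir (f : V -> V) (vs : seq V) : V -> V :=
  match vs with
  | [::] => f
  | v :: vs' => fun x => derive (iter_dir f vs') x v
  end.

Definition smooth (f : V -> V) : Prop :=
  forall vs : seq V, continuous (iter_dir f vs) /\
    forall (x v : V), derivable (iter_dir f vs) x v.

Definition diffeomorphism (g : V -> V) : Prop :=
  exists h : V -> V, [/\ cancel g h, cancel h g, smooth g & smooth h].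

Definition symplectic_form (Om : V -> V -> R) : Prop :=
  [/\ forall y, linear (fun x => Om x y),
      forall x, linear (Om x),
      forall x, Om x x = 0
    & forall x, (forall y, Om x y = 0) -> x = 0].

(* one-forms: theta z v = theta_z(v_z) *)
Definition theta0 (Om : V -> V -> R) : V -> V -> R :=
  fun z v => 2^-1 * Om z v.

Definition pullback (g : V -> V) (theta : V -> V -> R) : V -> V -> R :=
  fun z v => theta (g z) ('D_v g z).

Definition Aut_theta (Om : V -> V -> R) (g : V -> V) : Prop :=
  diffeomorphism g /\ pullback g (theta0 Om) = theta0 Om.

Definition Sp (Om : V -> V -> R) (g : V -> V) : Prop :=
  [/\ linear g, bijective g & forall x y, Om (g x) (g y) = Om x y].

End Defs.

From HB Require Import structures.
From mathcomp Require Import all_boot all_order all_algebra.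
From mathcomp Require Import all_classical all_reals all_analysis.
From mathcomp Require Import ring lra.
Set Implicit Arguments. Unset Strict Implicit. Unset Printing Implicit Defensive.
Import Order.TTheory GRing.Theory Num.Theory.
Import numFieldNormedType.Exports.
Local Open Scope ring_scope.

(** Invariance of theta0 under g reads Om (g z) (g'_z v) = Om z v.
   Differentiating it along a line z + t b and using the symmetry of second
   derivatives shows that every derivative g'_z preserves Om; a map preserving
   a nondegenerate form is linear, because the images of a basis form an
   invertible matrix.  Comparing the invariance with the symplecticity of g'_z
   gives the Euler relation g z = g'_z z, so t |-> g (t z) / t is constant on
   t > 0: g is positively homogeneous, hence equal to the linear map g'_0.
   Conversely a linear map is smooth and is its own derivative. *)

Section BilinearForm.
Variables (R : numFieldType) (n : nat) (Om : 'rV[R]_n -> 'rV[R]_n -> R).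
Local Notation V := 'rV[R]_n.
Hypothesis Om_linl : forall y, linear (fun x => Om x y).
Hypothesis Om_linr : forall x, linear (Om x).

Lemma OmDl x z y : Om (x + z) y = Om x y + Om z y.
Proof. by have := Om_linl y 1 x z; rewrite !scale1r. Qed.

Lemma OmDr x z y : Om y (x + z) = Om y x + Om y z.
Proof. by have := Om_linr y 1 x z; rewrite !scale1r. Qed.

Lemma Om0l y : Om 0 y = 0.
Proof. by have := Om_linl y (-1) y y; rewrite !scaleN1r !addNr. Qed.

Lemma Om0r y : Om y 0 = 0.
Proof. by have := Om_linr y (-1) y y; rewrite !scaleN1r !addNr. Qed.

Lemma OmZl a x y : Om (a *: x) y = a * Om x y.
Proof. by have := Om_linl y a x 0; rewrite Om0l !addr0. Qed.

Lemma OmZr a x y : Om y (a *: x) = a * Om y x.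
Proof. by have := Om_linr y a x 0; rewrite Om0r !addr0. Qed.

Lemma OmBl x z y : Om (x - z) y = Om x y - Om z y.
Proof. by rewrite OmDl -scaleN1r OmZl mulN1r. Qed.

Lemma Om_suml I (r : seq I) (P : pred I) (F : I -> V) y :
  Om (\sum_(i <- r | P i) F i) y = \sum_(i <- r | P i) Om (F i) y.
Proof. exact: (big_morph (Om^~ y) (fun a b => OmDl a b y) (Om0l y)). Qed.

Lemma Om_sumr I (r : seq I) (P : pred I) (F : I -> V) y :
  Om y (\sum_(i <- r | P i) F i) = \sum_(i <- r | P i) Om y (F i).
Proof. exact: (big_morph (Om y) (fun a b => OmDr a b y) (Om0r y)). Qed.

Definition gram : 'M[R]_n := \matrix_(i, j) Om 'e_i 'e_j.

Lemma Om_gram_sum x y : Om x y = \sum_i \sum_j x 0 i * y 0 j * gram i j.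
Proof.
rewrite {1}(row_sum_delta x) Om_suml; apply: eq_bigr => i _.
rewrite OmZl {1}(row_sum_delta y) Om_sumr big_distrr; apply: eq_bigr => j _.
by rewrite OmZr mxE /= mulrA.
Qed.

Lemma Om_gram_mx x y : Om x y = (x *m gram *m y^T) 0 0.
Proof.
rewrite Om_gram_sum exchange_big mxE; apply: eq_bigr => j _.
rewrite mxE big_distrl /=; apply: eq_bigr => i _.
by rewrite !mxE /= mulrAC.
Qed.

Lemma Om_skew : (forall x, Om x x = 0) -> forall x y, Om x y = - Om y x.
Proof.
move=> Om_alt x y; have := Om_alt (x + y).
by rewrite OmDl !OmDr !Om_alt add0r addr0 => /eqP; rewrite addr_eq0 => /eqP.
Qed.

Hypothesis Om_nondeg : forall x, (forall y, Om x y = 0) -> x = 0.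

Lemma gram_unitmx : gram \in unitmx.
Proof.
rewrite unitmxE unitfE; apply/negP => /det0P [v /negP v_neq0 vJ]; apply: v_neq0.
by apply/eqP/Om_nondeg => y; rewrite Om_gram_mx vJ mul0mx mxE.
Qed.

Section FormPreserving.
Variable L : V -> V.
Hypothesis L_preserves : forall a b, Om (L a) (L b) = Om a b.

Definition basis_image_mx : 'M[R]_n := \matrix_(i, j) L 'e_i 0 j.

Lemma basis_image_mx_gram : basis_image_mx *m gram *m basis_image_mx^T = gram.
Proof.
apply/matrixP => i j; rewrite [RHS]mxE -L_preserves Om_gram_mx !mxE.
apply: eq_bigr => k _; rewrite !mxE; congr (_ * _).
by apply: eq_bigr => l _; rewrite !mxE.
Qed.

Lemma basis_image_unitmx : basis_image_mx \in unitmx.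
Proof.
have := gram_unitmx; rewrite -{1}basis_image_mx_gram !unitmx_mul.
by case/andP => /andP[].
Qed.

Lemma orthogonal_image_eq0 w : (forall v, Om w (L v) = 0) -> w = 0.
Proof.
move=> w_orth; apply: Om_nondeg => y.
have wJA : w *m gram *m basis_image_mx^T = 0.
  apply/matrixP => i j; rewrite (ord1 i) [RHS]mxE -(w_orth 'e_j) Om_gram_mx !mxE.
  by apply: eq_bigr => k _; rewrite !mxE.
have AT_unit : basis_image_mx^T \in unitmx by rewrite unitmx_tr basis_image_unitmx.
have wJ : w *m gram = 0.
  by rewrite -[w *m gram]mulmx1 -(mulmxV AT_unit) mulmxA wJA mul0mx.
by rewrite Om_gram_mx wJ mul0mx mxE.
Qed.

Lemma form_preserving_linear : linear L.
Proof.
move=> a u v; apply/eqP; rewrite -subr_eq0; apply/eqP/orthogonal_image_eq0 => w.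
by rewrite !OmBl OmDl OmZl !L_preserves OmDl OmZl subrr.
Qed.

End FormPreserving.
End BilinearForm.

Section LineDerivative.
Variables (R : realType) (n : nat).
Local Notation V := 'rV[R]_n.

Lemma line_difference_quotient (W : normedModType R) (f : V -> W) p v s :
  (fun h : R => h^-1 *: (((fun r : R => f (p + r *: v)) \o shift s) (h *: 1)
                         - f (p + s *: v)))
  = (fun h : R => h^-1 *: ((f \o shift (p + s *: v)) (h *: v) - f (p + s *: v))).
Proof.
apply: funext => h /=; congr (_ *: (f _ - _)).
by rewrite /shift [h *: 1]mulr1 scalerDl addrCA addrC.
Qed.

Lemma derivable_line (W : normedModType R) (f : V -> W) p v s :
  derivable (fun r : R => f (p + r *: v)) s 1 <-> derivable f (p + s *: v) v.
Proof. by rewrite /derivable line_difference_quotient. Qed.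

Lemma derive_line (W : normedModType R) (f : V -> W) p v s :
  'D_1 (fun r : R => f (p + r *: v)) s = 'D_v f (p + s *: v).
Proof. by rewrite /derive line_difference_quotient. Qed.

Lemma is_derive_coord (f : R -> V) t i : derivable f t 1 ->
  is_derive t 1 (fun s => f s 0 i) ('D_1 f t 0 i).
Proof.
move=> df; apply: DeriveDef; first exact: ((derivable_mxP _ _ _).1 df 0 i).
by rewrite (derive_mx df) mxE.
Qed.

Lemma is_derive_line_coord (F : V -> V) p v s i :
  derivable F (p + s *: v) v ->
  is_derive s 1 (fun r : R => F (p + r *: v) 0 i) ('D_v F (p + s *: v) 0 i).
Proof.
by move=> dF; rewrite -derive_line; apply: is_derive_coord; exact/derivable_line.
Qed.

Lemma is_derive_Om (Om : V -> V -> R) (f k : R -> V) t :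
  (forall y, linear (fun x => Om x y)) -> (forall x, linear (Om x)) ->
  derivable f t 1 -> derivable k t 1 ->
  is_derive t 1 (fun s => Om (f s) (k s))
    (Om ('D_1 f t) (k t) + Om (f t) ('D_1 k t)).
Proof.
move=> Om_linl Om_linr df dk.
pose term i j := (fun s => f s 0 i) * (fun s => k s 0 j) * cst (gram Om i j).
have term_derive i j : is_derive t 1 (term i j)
    (('D_1 f t 0 i * k t 0 j + f t 0 i * 'D_1 k t 0 j) * gram Om i j).
  apply: is_derive_eq.
    exact: is_deriveM (is_deriveM (is_derive_coord i df) (is_derive_coord j dk))
                      (is_derive_cst _ _ _).
  rewrite scaler0 add0r /cst /=.
  rewrite -[f t 0 i *: _]/(f t 0 i * _) -[k t 0 j *: _]/(k t 0 j * _).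
  rewrite -[gram Om i j *: _]/(gram Om i j * _).
  ring.
have -> : (fun s => Om (f s) (k s)) = \sum_i \sum_j term i j.
  apply: funext => s; rewrite (Om_gram_sum Om_linl Om_linr) fct_sumE.
  by apply: eq_bigr => i _; rewrite fct_sumE.
apply: is_derive_eq (is_derive_sum (fun i => is_derive_sum (term_derive i))) _.
rewrite !(Om_gram_sum Om_linl Om_linr) -big_split; apply: eq_bigr => i _.
by rewrite -big_split; apply: eq_bigr => j _; rewrite mulrDl.
Qed.

Lemma continuous_coord_plane (G : V -> V) x a b j : continuous G ->
  forall e, 0 < e -> exists2 d, 0 < d & forall s t : R, `|s| < d -> `|t| < d ->
    `|G (x + s *: a + t *: b) 0 j - G x 0 j| < e.
Proof.
move=> G_cont e e_gt0.
have Gj_cont : {for x, continuous (fun y => G y 0 j)}.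
  exact: continuous_comp (G_cont x) (@coord_continuous R 1 n 0 j (G x)).
move/cvgrPdist_lt: Gj_cont => /(_ e e_gt0) /nbhs_ballP [d0 d0_gt0 ball_d0].
have ab_gt0 : 0 < `|a| + `|b| + 1 by rewrite ltr_pwDr // addr_ge0.
exists (d0 / (`|a| + `|b| + 1)); first by rewrite divr_gt0.
move=> s t hs ht; rewrite distrC; apply: ball_d0; rewrite -ball_normE /=.
rewrite -addrA opprD addrA subrr add0r normrN.
apply: le_lt_trans (ler_normD _ _) _; rewrite !normrZ.
set d := d0 / _ in hs ht.
have dE : d * (`|a| + `|b| + 1) = d0 by rewrite /d divfK // gt_eqF.
have := normr_ge0 a; have := normr_ge0 b; have := normr_ge0 s; have := normr_ge0 t.
nra.
Qed.

End LineDerivative.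

Section RealFunctions.
Variable R : realType.

Lemma MVT0 (f df : R -> R) (h : R) : 0 < h ->
  (forall x : R, is_derive x 1 f (df x)) -> exists2 c, 0 < c < h & f h - f 0 = df c * h.
Proof.
move=> h_gt0 f_der; have [|c c_in E] := MVT h_gt0 (fun x _ => f_der x).
  by apply: derivable_within_continuous => x _; exact: ex_derive.
by exists c; [rewrite in_itv /= in c_in | rewrite E subr0].
Qed.

Lemma homogeneous_of_euler (f df : R -> R) :
  (forall t : R, 0 < t -> is_derive t 1 f (df t)) ->
  (forall t : R, 0 < t -> f t = t * df t) ->
  forall t : R, 0 < t -> f t = t * f 1.
Proof.
move=> f_der f_euler.
have ratio_der (t : R) : 0 < t -> is_derive t 1 (fun s => f s * s^-1) 0.
  move=> t_gt0; have t_neq0 : t != 0 by rewrite gt_eqF.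
  apply: is_derive_eq (is_deriveM (f_der t t_gt0) (is_deriveV t_neq0 (is_derive_id t 1))) _.
  rewrite f_euler //= -[(t * df t) *: _]/((t * df t) * _) -[t^-1 *: _]/(t^-1 * _).
  by rewrite -[- t ^- 2 *: 1]/(- t ^- 2 * 1); field.
have ratio_const (a b : R) : 0 < a -> a < b -> f a * a^-1 = f b * b^-1.
  move=> a_gt0 ab; have pos x : x \in `]a, b[ -> 0 < x.
    by rewrite in_itv /= => /andP[ax _]; exact: lt_trans ax.
  have [|c _ E] := MVT ab (fun x x_in => ratio_der x (pos x x_in)).
    apply: derivable_within_continuous => x /[dup] x_in.
    rewrite in_itv /= => /andP[ax _].
    exact: (ex_derive (is_derive := ratio_der x (lt_le_trans a_gt0 ax))).
  by apply/eqP; rewrite eq_sym -subr_eq0 E mul0r.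
move=> t t_gt0; suff : f t * t^-1 = f 1 * 1^-1.
  by rewrite invr1 mulr1 => <-; rewrite mulrCA mulfV ?mulr1 // gt_eqF.
by case: (ltgtP t 1) => [t1|t1|->] //; [exact: ratio_const | exact/esym/ratio_const].
Qed.

Section Schwarz.
Variables (phi ps pt pst pts : R -> R -> R).
Hypothesis ps_der : forall s t : R, is_derive s 1 (fun s => phi s t) (ps s t).
Hypothesis pt_der : forall s t : R, is_derive t 1 (fun t => phi s t) (pt s t).
Hypothesis pst_der : forall s t : R, is_derive t 1 (fun t => ps s t) (pst s t).
Hypothesis pts_der : forall s t : R, is_derive s 1 (fun s => pt s t) (pts s t).
Hypothesis pst_cont0 : forall e, 0 < e -> exists2 d, 0 < d &
  forall s t : R, `|s| < d -> `|t| < d -> `|pst s t - pst 0 0| < e.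
Hypothesis pts_cont0 : forall e, 0 < e -> exists2 d, 0 < d &
  forall s t : R, `|s| < d -> `|t| < d -> `|pts s t - pts 0 0| < e.

(* Both mixed partials equal h^-2 times the second difference
   phi h h - phi h 0 - phi 0 h + phi 0 0 at some point of the square. *)
Lemma mixed_partials_near0 e : 0 < e -> `|pst 0 0 - pts 0 0| < e + e.
Proof.
move=> e_gt0; have [d1 d1_gt0 near1] := pst_cont0 e_gt0.
have [d2 d2_gt0 near2] := pts_cont0 e_gt0.
have d_gt0 : 0 < Num.min d1 d2 by rewrite lt_min d1_gt0 d2_gt0.
pose h := Num.min d1 d2 / 2.
have h_gt0 : 0 < h by rewrite divr_gt0.
have small x : 0 < x < h -> `|x| < d1 /\ `|x| < d2.
  case/andP=> x_gt0 xh; rewrite gtr0_norm //; apply/andP; rewrite -lt_min.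
  by rewrite (lt_le_trans xh) // ler_pdivrMr // ler_peMr ?ler1n // ltW.
have [c1 c1_in E1] := @MVT0 (fun s => phi s h - phi s 0) (fun s => ps s h - ps s 0)
  h h_gt0 (fun s => is_deriveB (ps_der s h) (ps_der s 0)).
have [c2 c2_in E2] := MVT0 h_gt0 (pst_der c1).
have [c3 c3_in E3] := @MVT0 (fun t => phi h t - phi 0 t) (fun t => pt h t - pt 0 t)
  h h_gt0 (fun t => is_deriveB (pt_der h t) (pt_der 0 t)).
have [c4 c4_in E4] := MVT0 h_gt0 (pts_der ^~ c3).
have mixed_eq : pst c1 c2 = pts c4 c3.
  have : (ps c1 h - ps c1 0) * h = (pt h c3 - pt 0 c3) * h by rewrite -E1 -E3; ring.
  have h_neq0 : h != 0 by rewrite gt_eqF.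
  by rewrite E2 E4 => /(mulIf h_neq0) /(mulIf h_neq0).
have [c1_d1 _] := small _ c1_in; have [c2_d1 _] := small _ c2_in.
have [_ c3_d2] := small _ c3_in; have [_ c4_d2] := small _ c4_in.
rewrite -(subrKA (pst c1 c2)) (le_lt_trans (ler_normD _ _)) //.
rewrite ltrD //; first by rewrite distrC near1.
by rewrite mixed_eq near2.
Qed.

Lemma mixed_partials_eq : pst 0 0 = pts 0 0.
Proof.
apply/eqP; rewrite -subr_eq0 -normr_le0; apply/ler_addgt0Pr => e e_gt0.
rewrite add0r ltW // [e in _ < e]splitr.
by apply: mixed_partials_near0; rewrite divr_gt0.
Qed.

End Schwarz.
End RealFunctions.

Section Smooth.
Variables (R : realType) (n : nat).
Local Notation V := 'rV[R]_n.
Variable F : V -> V.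
Hypothesis F_smooth : smooth F.

Lemma smooth_derivable vs x v : derivable (iter_dir F vs) x v.
Proof. by case: (F_smooth vs). Qed.

Lemma smooth_continuous vs : continuous (iter_dir F vs).
Proof. by case: (F_smooth vs). Qed.

Lemma iter_dirC x a b : iter_dir F [:: b; a] x = iter_dir F [:: a; b] x.
Proof.
apply/matrixP => i j; rewrite (ord1 i).
have swap r t : x + r *: a + t *: b = x + t *: b + r *: a by rewrite addrAC.
have := @mixed_partials_eq R (fun s t => F (x + s *: a + t *: b) 0 j)
  (fun s t => iter_dir F [:: a] (x + s *: a + t *: b) 0 j)
  (fun s t => iter_dir F [:: b] (x + s *: a + t *: b) 0 j)
  (fun s t => iter_dir F [:: b; a] (x + s *: a + t *: b) 0 j)
  (fun s t => iter_dir F [:: a; b] (x + s *: a + t *: b) 0 j).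
rewrite !scale0r !addr0; apply => [s t|s t|s t|s t|e|e].
- under eq_fun do rewrite swap.
  by rewrite swap; apply: is_derive_line_coord; exact: (@smooth_derivable [::]).
- by apply: is_derive_line_coord; exact: (@smooth_derivable [::]).
- by apply: is_derive_line_coord; exact: (@smooth_derivable [:: a]).
- under eq_fun do rewrite swap.
  by rewrite swap; apply: is_derive_line_coord; exact: (@smooth_derivable [:: b]).
- exact: continuous_coord_plane (@smooth_continuous [:: b; a]) e.
- exact: continuous_coord_plane (@smooth_continuous [:: a; b]) e.
Qed.

End Smooth.

Section LinearMap.
Variables (R : realType) (n : nat).
Local Notation V := 'rV[R]_n.
Variable f : V -> V.
Hypothesis f_linear : linear f.

Lemma linear_difference_quotient (x v : V) : \forall h \near dnbhs (0 : R),
  h^-1 *: ((f \o shift x) (h *: v) - f x) = f v.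
Proof.
near=> h; have h_neq0 : h != 0 by near: h; exact: nbhs_dnbhs_neq.
by rewrite /= /shift f_linear addrK scalerA mulVf // scale1r.
Unshelve. all: by end_near.
Qed.

Lemma linear_derivable x v : derivable f x v.
Proof. exact: (is_cvg_near_cst (f v) (linear_difference_quotient x v)). Qed.

Lemma linear_derive x v : 'D_v f x = f v.
Proof. by apply: lim_near_cst => //; exact: linear_difference_quotient. Qed.

Lemma linear_continuous_rV : continuous f.
Proof.
pose fL : {linear V -> V} := HB.pack f (GRing.isLinear.Build _ _ _ _ f f_linear).
have -> : f = \sum_i (fun x : V => x 0 i *: f 'e_i).
  apply: funext => x; rewrite fct_sumE {1}(row_sum_delta x).
  rewrite -[f _]/(fL _) linear_sum; apply: eq_bigr => i _; exact: linearZ.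
move=> x; apply: differentiable_continuous.
apply: differentiable_sum => i; apply: differentiableZl.
exact: (@differentiable_coord R 1 n x 0 i).
Qed.

Lemma iter_dir_linear_cst vs v : exists c, iter_dir f (v :: vs) = fun=> c.
Proof.
elim: vs v => [|w vs IH] v.
  by exists (f v); apply: funext => x; exact: linear_derive.
have [c Ec] := IH w; exists 0.
rewrite [iter_dir _ _]/= -[fun x => 'D_w _ x]/(iter_dir f (w :: vs)) Ec.
by apply: funext => x; exact: derive_cst.
Qed.

Lemma linear_smooth : smooth f.
Proof.
case=> [|v vs].
  by split; [exact: linear_continuous_rV | move=> x v; exact: linear_derivable].
have [c ->] := iter_dir_linear_cst vs v.
by split; [exact: cst_continuous | move=> x w; exact: derivable_cst].
Qed.

End LinearMap.

Lemma pullback_theta0P (R : realType) (n : nat) (Om : 'rV[R]_n -> 'rV[R]_n -> R)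
    (g : 'rV[R]_n -> 'rV[R]_n) :
  pullback g (theta0 Om) = theta0 Om <-> forall z v, Om (g z) ('D_v g z) = Om z v.
Proof.
rewrite /pullback /theta0; split=> [pb z v | g_inv].
  by have /mulfI := congr1 (fun F => F z v) pb; apply; rewrite invr_eq0 pnatr_eq0.
by apply: funext => z; apply: funext => v; rewrite g_inv.
Qed.

Section InvariantMap.
Variables (R : realType) (n : nat) (Om : 'rV[R]_n -> 'rV[R]_n -> R).
Local Notation V := 'rV[R]_n.
Hypothesis Om_linl : forall y, linear (fun x => Om x y).
Hypothesis Om_linr : forall x, linear (Om x).
Hypothesis Om_alt : forall x, Om x x = 0.
Hypothesis Om_nondeg : forall x, (forall y, Om x y = 0) -> x = 0.
Variable g : V -> V.
Hypothesis g_smooth : smooth g.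
Hypothesis g_invariant : forall z v, Om (g z) ('D_v g z) = Om z v.

Lemma invariance_derive x a b :
  Om ('D_b g x) ('D_a g x) + Om (g x) (iter_dir g [:: b; a] x) = Om b a.
Proof.
have g_der : derivable (fun t : R => g (x + t *: b)) 0 1.
  by apply/derivable_line; exact: (smooth_derivable g_smooth (vs := [::])).
have Dg_der : derivable (fun t : R => iter_dir g [:: a] (x + t *: b)) 0 1.
  by apply/derivable_line; exact: (smooth_derivable g_smooth (vs := [:: a])).
have line_der : derivable (fun t : R => x + t *: b) 0 1.
  by apply/(derivable_line id); exact: derivable_id.
have lhs := is_derive_Om Om_linl Om_linr g_der Dg_der.
have rhs := is_derive_Om Om_linl Om_linr line_der (@derivable_cst R R^o _ a 0 1).
have lhsE : (fun s : R => Om (g (x + s *: b)) (iter_dir g [:: a] (x + s *: b)))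
    = fun s => Om (x + s *: b) (cst a s) by apply: funext => s; exact: g_invariant.
rewrite lhsE in lhs.
have := @derive_val _ _ _ _ _ _ _ lhs; rewrite (@derive_val _ _ _ _ _ _ _ rhs).
rewrite (derive_line g) (derive_line (iter_dir g [:: a])) (derive_line id).
rewrite derive_id derive_cst (Om0r Om_linr).
by rewrite !scale0r !addr0 => <-.
Qed.

Lemma derive_preserves x a b : Om ('D_a g x) ('D_b g x) = Om a b.
Proof.
have := invariance_derive x a b; have := invariance_derive x b a.
rewrite (iter_dirC g_smooth) !(Om_skew Om_linl Om_linr Om_alt b a).
rewrite (Om_skew Om_linl Om_linr Om_alt ('D_b g x)).
lra.
Qed.

Lemma derive_dir_linear x : linear (fun v => 'D_v g x).
Proof. exact: (form_preserving_linear Om_linl Om_linr Om_nondeg (derive_preserves x)). Qed.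

Lemma euler_relation z : g z = 'D_z g z.
Proof.
apply/eqP; rewrite -subr_eq0; apply/eqP.
apply: (orthogonal_image_eq0 Om_linl Om_linr Om_nondeg (derive_preserves z)) => v.
by rewrite (OmBl Om_linl) g_invariant derive_preserves subrr.
Qed.

Lemma invariant_map0 : g 0 = 0.
Proof. by rewrite euler_relation derive0. Qed.

Lemma invariant_map_homogeneous z t : 0 < t -> g (t *: z) = t *: g z.
Proof.
move=> t_gt0; apply/matrixP => i j; rewrite (ord1 i) mxE.
have := @homogeneous_of_euler R (fun t => g (t *: z) 0 j)
  (fun t => 'D_z g (t *: z) 0 j); rewrite scale1r; apply=> // s _.
- have := is_derive_line_coord j (smooth_derivable g_smooth (vs := [::]) (x := 0 + s *: z) (v := z)).
  by rewrite add0r; under eq_fun do rewrite add0r.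
- have := derive_dir_linear (s *: z) s z 0.
  by rewrite addr0 derive0 addr0 euler_relation => ->; rewrite mxE.
Qed.

Lemma invariant_map_derive0 z : g z = 'D_z g 0.
Proof.
rewrite /derive cvg_at_rightE; last exact: (smooth_derivable g_smooth (vs := [::])).
apply/esym/lim_near_cst => //; near=> h.
have h_gt0 : 0 < h by near: h; exact: nbhs_right_gt.
rewrite /= /shift addr0 invariant_map0 subr0 invariant_map_homogeneous //.
by rewrite scalerA mulVf ?scale1r // gt_eqF.
Unshelve. all: by end_near.
Qed.

Lemma invariant_map_linear : linear g.
Proof.
move=> a u v; rewrite !(invariant_map_derive0 (_ + _)).
by rewrite (invariant_map_derive0 u) (invariant_map_derive0 v) derive_dir_linear.
Qed.

Lemma invariant_map_preserves x y : Om (g x) (g y) = Om x y.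
Proof. by rewrite !invariant_map_derive0 derive_preserves. Qed.

End InvariantMap.

Theorem theorem1 (R : realType) (n : nat) (Om : 'rV[R]_n -> 'rV[R]_n -> R) :
  symplectic_form Om ->
  forall g : 'rV[R]_n -> 'rV[R]_n, Aut_theta Om g <-> Sp Om g.
Proof.
case=> Om_linl Om_linr Om_alt Om_nondeg g; split.
- case=> [[h [gK hK g_smooth _]] /pullback_theta0P g_inv]; split.
  + exact: invariant_map_linear g_inv.
  + by exists h.
  + exact: invariant_map_preserves g_inv.
- case=> g_linear [h gK hK] g_preserves.
  pose gL : {linear _ -> _} := HB.pack g (GRing.isLinear.Build _ _ _ _ g g_linear).
  have h_linear : linear h := can2_linear (f := gL) gK hK.
  split; first by exists h; split=> //; exact: linear_smooth.
  by apply/pullback_theta0P => z v; rewrite linear_derive.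
Qed.
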